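(* Let $(X,d)$ be a compact metric space and $f_{0,\infty}=\{f_n\}_{n=0}^\infty$ an equi-continuous sequence of continuous surjective self-maps of $X$. For $i\ge0$ let $f_{i,\infty}=\{f_n\}_{n=i}^\infty$. Then for any $A\in\mathcal{S}$, \[h_{A}(f_{i,\infty})\geq h_{A}(f_{j,\infty}),\quad 0\leq i\leq j<\infty,\] and thus \[h^{*}(f_{i,\infty})=h^{*}(f_{j,\infty}),\quad 0\leq i\leq j<\infty.\]
   Context: $f_{0,\infty}$ is equi-continuous if for every $\epsilon>0$ there is $\delta>0$ with $d(x,y)<\delta\Rightarrow d(f_n x,f_n y)<\epsilon$ for all $n$. $f_i^n=f_{i+n-1}\circ\cdots\circ f_i$ ($n\ge1$), $f_i^0=\mathrm{id}$, $f_i^{-n}(B)=(f_i^n)^{-1}(B)$. $\mathcal S$ is the set of strictly increasing sequences $A=\{a_k\}_{k\ge1}$ of nonnegative integers. $h_A(f_{i,\infty})=\sup_{\mathscr A}\limsup_{n\to\infty}\frac1n\log\mathcal N(\bigvee_{k=1}^n f_i^{-a_k}\mathscr A)$ over finite open covers $\mathscr A$ ($\bigvee$ = common refinement, $\mathcal N$ = minimal cardinality of a subcover), and $h^*(f_{i,\infty})=\sup_{A\in\mathcal S}h_A(f_{i,\infty})$. *)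

From HB Require Import structures.
From mathcomp Require Import all_boot all_order all_algebra.
From mathcomp Require Import all_classical all_reals all_analysis.
Set Implicit Arguments. Unset Strict Implicit. Unset Printing Implicit Defensive.
Import Order.TTheory GRing.Theory Num.Theory.
Local Open Scope classical_set_scope.
Local Open Scope ring_scope.

Section Defs.
Variables (R : realType) (X : metricType R).

Definition equicont (f : nat -> X -> X) : Prop :=
  forall eps : R, 0 < eps -> exists2 delta : R, 0 < delta &
    forall x y : X, mdist x y < delta -> forall n, mdist (f n x) (f n y) < eps.

Definition tailseq (f : nat -> X -> X) (i : nat) : nat -> X -> X :=
  fun n => f (i + n)%N.

Fixpoint fcomp (g : nat -> X -> X) (n : nat) : X -> X :=
  match n with
  | 0 => id
  | n'.+1 => g n' \o fcomp g n'
  end.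

Definition open_cover (m : nat) (U : 'I_m -> set X) : Prop :=
  (forall k, open (U k)) /\ [set: X] `<=` \bigcup_(k in [set: 'I_m]) U k.

(* N(C): minimal cardinality of a finite subcover of the family of sets C
   (0 if there is no finite subcover; never the case in our use) *)
Definition has_subcover_of_size (C : set (set X)) (n : nat) : Prop :=
  exists s : 'I_n -> set X,
    (forall k, C (s k)) /\ [set: X] `<=` \bigcup_(k in [set: 'I_n]) s k.

Definition Ncov (C : set (set X)) : nat :=
  match pselect (exists n, `[< has_subcover_of_size C n >]) with
  | left h => ex_minn h
  | right _ => 0%N
  end.

(* the join  \/_{k=1}^n g_0^{-a_k} U, where the sequence A = {a_k}_{k>=1}
   is represented 0-indexed by a : nat -> nat (a k = a_{k+1}) *)
Definition join_cover (g : nat -> X -> X) (a : nat -> nat) (n m : nat)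
  (U : 'I_m -> set X) : set (set X) :=
  [set S | exists c : 'I_n -> 'I_m,
     S = \bigcap_(k in [set: 'I_n]) (fcomp g (a k) @^-1` U (c k))].

Definition incr_seq (a : nat -> nat) : Prop := forall k, (a k < a k.+1)%N.

Definition hA (g : nat -> X -> X) (a : nat -> nat) : \bar R :=
  ereal_sup [set h | exists m (U : 'I_m -> set X), open_cover U /\
     h = limn_esup (fun n => ((ln (Ncov (join_cover g a n U))%:R / n%:R)%:E))].

Definition hstar (g : nat -> X -> X) : \bar R :=
  ereal_sup [set hA g a | a in incr_seq].

End Defs.

From HB Require Import structures.
From mathcomp Require Import all_boot all_order all_algebra.
From mathcomp Require Import all_classical all_reals all_analysis.
From mathcomp Require Import finmap.
Set Implicit Arguments.
Unset Strict Implicit.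
Unset Printing Implicit Defensive.
Import Order.TTheory GRing.Theory Num.Theory.
Local Open Scope classical_set_scope.
Local Open Scope ring_scope.

(* By a Lebesgue number argument and equicontinuity, every open cover U has a
   finite open refinement V whose members are mapped into members of U by
   every composite f_{s+p-1} o ... o f_s.  Pushing a subcover of the join of V
   along A forward by the surjection f_0^p gives a cover of the same size by
   members of the join of U along A for f_{p,oo}; hence
   h_A(f_{p,oo}) <= h_A(f_{0,oo}).
   Conversely, the join of U along a_1, ..., a_{p+n} for f_{0,oo} needs at
   most |U|^p times as many sets as the join of U for f_{p,oo} along the
   increasing sequence a_{p+k} - p, and the factor |U|^p disappears in the
   limit of (1/n) log; hence h_A(f_{0,oo}) <= h^*(f_{p,oo}). *)

Lemma limn_esup_le_shift (R : realType) (u v : (\bar R)^nat) (K : nat) :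
  (forall e : R, 0 < e -> \forall n \near \oo, (u (n + K)%N <= v n + e%:E)%E) ->
  (limn_esup u <= limn_esup v)%E.
Proof.
move=> uv; apply/lee_addgt0Pr => e e0; rewrite -leeBlDr //.
apply: le_ereal_inf_tmp => _ [V [M _ MV] <-]; rewrite leeBlDr //.
have [N _ uvN] := uv e e0; set L := (maxn N M + K)%N.
apply: (@le_trans _ _ (ereal_sup (u @` [set n | (L <= n)%N]))).
  by apply: ereal_inf_lbound; exists [set n | (L <= n)%N] => //; exists L.
apply: ge_ereal_sup => _ [n /= Ln <-].
have KL : (K <= n)%N by rewrite (leq_trans _ Ln) ?leq_addl.
have NML : (maxn N M <= n - K)%N by rewrite leq_subRL // addnC.
rewrite -(subnK KL); apply: (le_trans (uvN _ _)).
  by rewrite /= (leq_trans (leq_maxl N M)).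
rewrite leeD2r //; apply: ereal_sup_ubound; exists (n - K)%N => //.
by apply: MV; rewrite /= (leq_trans (leq_maxr N M)).
Qed.

(* ln 0 = 0 here, so ln is nonnegative and monotone on all of nat. *)
Lemma ln_nat_ge0 (R : realType) (b : nat) : 0 <= ln (b%:R : R).
Proof. by case: b => [|b]; [rewrite ln0 | apply: ln_ge0; rewrite ler1n]. Qed.

Lemma ler_ln_nat (R : realType) (a b : nat) :
  (a <= b)%N -> ln (a%:R : R) <= ln b%:R.
Proof.
case: a => [|a] ab; first by rewrite ln0 // ln_nat_ge0.
by rewrite ler_ln ?posrE ?ltr0n ?ler_nat // (leq_trans _ ab).
Qed.

Lemma ln_nat_le_add (R : realType) (a b c : nat) :
  (a <= b * c)%N -> ln (a%:R : R) <= ln b%:R + ln c%:R.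
Proof.
move=> abc; have [->|a0] := posnP a; first by rewrite ln0 ?addr_ge0 ?ln_nat_ge0.
have [b0 c0] : (0 < b)%N /\ (0 < c)%N.
  by apply/andP; rewrite -muln_gt0 (leq_trans a0).
by rewrite -lnM ?posrE ?ltr0n // -natrM; exact: ler_ln_nat.
Qed.

Lemma compact_finite_subcover (T : topologicalType) (f : T -> set T) :
  compact [set: T] -> (forall z, open (f z)) -> (forall z, f z z) ->
  exists m (z : 'I_m -> T), forall y, exists l, f (z l) y.
Proof.
move=> cT fo fz; have [[x0 _]|T0] := pselect (exists x : T, True); last first.
  have z0 : 'I_0 -> T by case.
  by exists 0%N, z0 => y; case: T0; exists y.
pose TP : ptopologicalType := HB.pack T (isPointed.Build T x0).
have : cover_compact [set: TP] by rewrite -compact_cover.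
case/(_ T [set: T] f (fun z _ => fo z)) => [y _|D _ Dcov]; first by exists y.
exists (size D), (fun l => nth x0 D l) => y; have [z zD fzy] := Dcov y I.
have zD' : (index z D < size D)%N by rewrite index_mem.
by exists (Ordinal zD'); rewrite /= nth_index.
Qed.

Lemma lebesgue_number (R : realType) (T : pseudoMetricType R) m
    (U : 'I_m -> set T) :
  compact [set: T] -> (forall k, open (U k)) ->
  [set: T] `<=` \bigcup_(k in [set: 'I_m]) U k ->
  exists2 d : R, 0 < d & forall x, exists k, ball x d `<=` U k.
Proof.
move=> /compact_near_coveringP cover Uo Ucov.
have : \forall d \near 0^'+, [set: T] `<=` fun x => exists k, ball x d `<=` U k.
  apply: cover => x _; have [k _ Ukx] := Ucov x I.
  have /nbhs_ballP[e /= e0 ekU] : nbhs x (U k) by exact: open_nbhs_nbhs.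
  near=> y d; exists k; apply: subset_trans ekU => z yz.
  rewrite [e]splitr; apply: (ball_triangle _ (le_ball _ yz)) => /=.
    by near: y; apply: near_ball; rewrite divr_gt0.
  by apply/ltW; near: d; apply: nbhs_right_lt; rewrite divr_gt0.
move=> dU; near (0 : R)^'+ => d.
exists d; first by near: d; exact: nbhs_right_gt.
by move=> x; apply: (near dU d).
Unshelve. all: by end_near. Qed.

Section SubcoverCount.
Variables (R : realType) (X : metricType R).
Implicit Types (C D : set (set X)) (g : nat -> X -> X) (a : nat -> nat).

Lemma has_subcover_of_size_card C (I : finType) (s : I -> set X) :
  (forall i, C (s i)) -> [set: X] `<=` \bigcup_(i in [set: I]) s i ->
  has_subcover_of_size C #|I|.
Proof.
move=> Cs cov; exists (fun k => s (enum_val k)); split => // x _.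
have [i _ xi] := cov x Logic.I.
by exists (enum_rank i) => //; rewrite enum_rankK.
Qed.

Lemma Ncov_le C n : has_subcover_of_size C n -> (Ncov C <= n)%N.
Proof.
move=> Cn; rewrite /Ncov; case: pselect => [h|h]; last by [].
by case: ex_minnP => k _; apply; apply/asboolP.
Qed.

Lemma has_subcover_Ncov C n :
  has_subcover_of_size C n -> has_subcover_of_size C (Ncov C).
Proof.
move=> Cn; rewrite /Ncov; case: pselect => [h|h].
  by case: ex_minnP => k /asboolP.
by case: h; exists n; apply/asboolP.
Qed.

Lemma Ncov_le_refinement D (I : finType) (s : I -> set X) :
  [set: X] `<=` \bigcup_(i in [set: I]) s i ->
  (forall i, exists2 T, D T & s i `<=` T) -> (Ncov D <= #|I|)%N.
Proof.
move=> cov sD; have /choice[t tD] : forall i, exists T, D T /\ s i `<=` T.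
  by move=> i; have [T ? ?] := sD i; exists T.
apply/Ncov_le/(has_subcover_of_size_card (s := t)) => [i|x /cov[i _ six]].
  exact: (tD i).1.
by exists i => //; apply: (tD i).2.
Qed.

Lemma cover_index m (U : 'I_m -> set X) :
  [set: X] `<=` \bigcup_(k in [set: 'I_m]) U k ->
  exists c : X -> 'I_m, forall x, U (c x) x.
Proof.
move=> cov; have /choice[c Uc] : forall x, exists k, U k x.
  by move=> x; have [k _ Ukx] := cov x Logic.I; exists k.
by exists c.
Qed.

Lemma join_cover_subcover g a n m (U : 'I_m -> set X) :
  [set: X] `<=` \bigcup_(k in [set: 'I_m]) U k ->
  has_subcover_of_size (join_cover g a n U) (m ^ n)%N.
Proof.
move=> /cover_index[c Uc].
have -> : (m ^ n = #|{ffun 'I_n -> 'I_m}|)%N by rewrite card_ffun !card_ord.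
apply: (has_subcover_of_size_card (s := fun c : {ffun 'I_n -> 'I_m} =>
  \bigcap_(k in [set: 'I_n]) (fcomp g (a k) @^-1` U (c k)))) => [c'|x _].
  by exists c'.
by exists [ffun k : 'I_n => c (fcomp g (a k) x)] => // k _ /=; rewrite ffunE.
Qed.

End SubcoverCount.

Section TailEntropy.
Variables (R : realType) (X : metricType R).
Implicit Types (g : nat -> X -> X) (a : nat -> nat).

Lemma fcompD g i p x : fcomp g (i + p) x = fcomp (tailseq g i) p (fcomp g i x).
Proof. by elim: p => [|p IH]; rewrite ?addn0 // addnS /= IH. Qed.

Lemma fcomp_surj g p : (forall n y, exists x, g n x = y) ->
  forall y, exists x, fcomp g p x = y.
Proof.
move=> gs; elim: p => [|p IH] y; first by exists y.
by have [z <-] := gs p y; have [x <-] := IH z; exists x.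
Qed.

Lemma tailseqD g i p : tailseq (tailseq g i) p = tailseq g (i + p).
Proof. by apply/funext => n; rewrite /tailseq addnA. Qed.

Lemma equicont_tailseq g i : equicont g -> equicont (tailseq g i).
Proof.
by move=> ge e /(ge e)[d d0 gd]; exists d => // x y /gd xy n; exact: xy.
Qed.

Lemma equicont_fcomp_tailseq g p : equicont g ->
  equicont (fun s => fcomp (tailseq g s) p).
Proof.
move=> ge; elim: p => [|p IH] e e0; first by exists e.
have [d1 d10 gd1] := ge e e0; have [d2 d20 IHd2] := IH d1 d10.
by exists d2 => // x y xy s; apply: gd1; exact: IHd2.
Qed.

Lemma equicont_refine_cover (F : nat -> X -> X) m (U : 'I_m -> set X) :
  compact [set: X] -> equicont F -> open_cover U ->
  exists m' (V : 'I_m' -> set X), open_cover V /\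
    forall l s, exists k, V l `<=` F s @^-1` U k.
Proof.
move=> cX Feq [Uo Ucov].
have [d d0 dU] := lebesgue_number cX Uo Ucov.
have [e e0 eF] := Feq d d0.
have [m' [z zcov]] := compact_finite_subcover (f := fun x => (ball x e)°) cX
  (fun=> @open_interior _ _) (fun x => nbhsx_ballx x e e0).
exists m', (fun l => (ball (z l) e)°); split; first split.
- by move=> l; exact: open_interior.
- by move=> y _; have [l zly] := zcov y; exists l.
move=> l s; have [k dk] := dU (F s (z l)).
exists k => y /interior_subset; rewrite ballEmdist => zy.
by apply: dk; rewrite ballEmdist; exact: eF.
Qed.

Lemma Ncov_join_cover_tail_le g p a n m (U : 'I_m -> set X)
    m' (V : 'I_m' -> set X) :
  (forall y, exists x, fcomp g p x = y) ->
  [set: X] `<=` \bigcup_(l in [set: 'I_m']) V l ->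
  (forall l s, exists k, V l `<=` fcomp (tailseq g s) p @^-1` U k) ->
  (Ncov (join_cover (tailseq g p) a n U) <= Ncov (join_cover g a n V))%N.
Proof.
move=> gps Vcov VU.
have [S [SJ Scov]] := has_subcover_Ncov (join_cover_subcover g a n Vcov).
rewrite -[leqRHS]card_ord.
apply: (Ncov_le_refinement (s := fun i => fcomp g p @` S i)) => [y _|i].
  have [x <-] := gps y; have [i _ Six] := Scov x Logic.I.
  by exists i => //; exists x.
have [c ->] := SJ i; have /choice[l Vl] := fun k : 'I_n => VU (c k) (a k).
exists (\bigcap_(k in [set: 'I_n]) (fcomp (tailseq g p) (a k) @^-1` U (l k))).
  by exists l.
(* both sides equal f_0^{p + a_k} x, split at a_k or at p *)
move=> _ [x Sx <-] k _ /=; rewrite -fcompD addnC fcompD.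
exact: Vl (Sx k Logic.I).
Qed.

Definition shift_seq a p : nat -> nat := fun k => (a (p + k) - p)%N.

Lemma Ncov_join_cover_split g p a n m (U : 'I_m -> set X) :
  (forall k, p <= a (p + k))%N ->
  [set: X] `<=` \bigcup_(k in [set: 'I_m]) U k ->
  (Ncov (join_cover g a (p + n) U) <=
   m ^ p * Ncov (join_cover (tailseq g p) (shift_seq a p) n U))%N.
Proof.
move=> pa Ucov; have [cU Uc] := cover_index Ucov.
have [S [SJ Scov]] :=
  has_subcover_Ncov (join_cover_subcover (tailseq g p) (shift_seq a p) n Ucov).
set N := Ncov _ in SJ Scov *.
have -> : (m ^ p * N = #|{: {ffun 'I_p -> 'I_m} * 'I_N}|)%N.
  by rewrite card_prod card_ffun !card_ord.
apply: (Ncov_le_refinement (s := fun ci : {ffun 'I_p -> 'I_m} * 'I_N =>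
  \bigcap_(k in [set: 'I_p]) (fcomp g (a k) @^-1` U (ci.1 k)) `&`
  fcomp g p @^-1` S ci.2)) => [x _|[c i]].
  have [i _ Si] := Scov (fcomp g p x) Logic.I.
  exists ([ffun k : 'I_p => cU (fcomp g (a k) x)], i) => //.
  by split => // k _ /=; rewrite ffunE.
have [c' Sc'] := SJ i.
exists (\bigcap_(k in [set: 'I_(p + n)]) (fcomp g (a k) @^-1`
  U (match fintype.split k with inl k1 => c k1 | inr k2 => c' k2 end))).
  by eexists.
move=> x [/= xc]; rewrite Sc' => xc' k _ /=.
case: splitP => [k1|k2] ->; first exact: xc.
by have := xc' k2 Logic.I; rewrite /= -fcompD /shift_seq subnKC.
Qed.

Definition hA_cover g a m (U : 'I_m -> set X) : \bar R :=
  limn_esup (fun n => ((ln (Ncov (join_cover g a n U))%:R / n%:R)%:E)).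

Lemma hA_cover_le_hA g a m (U : 'I_m -> set X) :
  open_cover U -> (hA_cover g a U <= hA g a)%E.
Proof. by move=> Uc; apply: ereal_sup_ubound; exists m, U. Qed.

Lemma hA_tailseq_le g p a : compact [set: X] ->
  (forall n y, exists x, g n x = y) -> equicont g ->
  (hA (tailseq g p) a <= hA g a)%E.
Proof.
move=> cX gs ge; apply: ge_ereal_sup => _ [m [U [Uc ->]]].
have [m' [V [Vc VU]]] :=
  equicont_refine_cover cX (equicont_fcomp_tailseq p ge) Uc.
apply: le_trans _ (hA_cover_le_hA g a Vc).
apply: (limn_esup_le_shift (K := 0)) => e e0; apply: nearW => n.
rewrite addn0 -EFinD lee_fin.
have /(ler_ln_nat R) NUV :=
  Ncov_join_cover_tail_le a n (fcomp_surj p gs) Vc.2 VU.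
apply: le_trans (ler_wpM2r _ NUV) _; first by rewrite invr_ge0.
by rewrite lerDl ltW.
Qed.

Lemma incr_seq_ge a : incr_seq a -> forall k, (k <= a k)%N.
Proof. by move=> ai; elim=> // k IH; exact: leq_ltn_trans IH (ai k). Qed.

Lemma incr_seq_shift a p : incr_seq a -> incr_seq (shift_seq a p).
Proof.
move=> ai k; rewrite /shift_seq addnS ltn_sub2r //.
by rewrite (leq_trans _ (incr_seq_ge ai _)) // ltnS leq_addr.
Qed.

Lemma hA_le_tailseq_shift g p a : incr_seq a ->
  (hA g a <= hA (tailseq g p) (shift_seq a p))%E.
Proof.
move=> ai; apply: ge_ereal_sup => _ [m [U [Uc ->]]].
apply: le_trans _ (hA_cover_le_hA _ _ Uc).
apply: (limn_esup_le_shift (K := p)) => e e0.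
have pa k : (p <= a (p + k))%N.
  by rewrite (leq_trans (leq_addr k p)) ?incr_seq_ge.
set C := ln ((m ^ p)%N%:R : R); have C0 : 0 <= C by exact: ln_nat_ge0.
near=> n.
have n0 : (0 < n)%N by near: n; exact: nbhs_infty_gt.
have Cen : C / e <= n%:R by near: n; exact: nbhs_infty_ger.
set L := ln (Ncov (join_cover (tailseq g p) (shift_seq a p) n U))%:R.
have L0 : 0 <= L by exact: ln_nat_ge0.
have := ln_nat_le_add R (Ncov_join_cover_split g n pa Uc.2).
rewrite -/C -/L => NUU.
rewrite addnC -EFinD lee_fin.
apply: (@le_trans _ _ ((C + L) / n%:R)).
  apply: (@le_trans _ _ ((C + L) / (p + n)%:R)).
    by apply: ler_wpM2r; rewrite ?invr_ge0.
  apply: ler_wpM2l; first exact: addr_ge0.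
  by rewrite lef_pV2 ?posrE ?ltr0n ?addn_gt0 ?n0 ?orbT // ler_nat leq_addl.
by rewrite mulrDl addrC lerD2l ler_pdivrMr ?ltr0n // mulrC -ler_pdivrMr.
Unshelve. all: by end_near. Qed.

End TailEntropy.

Theorem proposition4p6 (R : realType) (X : metricType R) (f : nat -> X -> X) :
  compact [set: X] ->
  (forall n, continuous (f n)) ->
  (forall n (y : X), exists x : X, f n x = y) ->
  equicont f ->
  (forall a : nat -> nat, incr_seq a ->
     forall i j : nat, (i <= j)%N ->
       (hA (tailseq f j) a <= hA (tailseq f i) a)%E) /\
  (forall i j : nat, (i <= j)%N -> hstar (tailseq f i) = hstar (tailseq f j)).
Proof.
move=> cX _ fs fe.
have mono a i j : (i <= j)%N -> (hA (tailseq f j) a <= hA (tailseq f i) a)%E.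
  move=> ij; rewrite -(subnKC ij) -tailseqD.
  exact: hA_tailseq_le cX (fun n => fs _) (equicont_tailseq i fe).
split=> [a _|i j ij]; first exact: mono.
apply/eqP; rewrite eq_le; apply/andP; split; apply: ge_ereal_sup => _ [a ai <-].
  apply: le_trans (hA_le_tailseq_shift (tailseq f i) (j - i) ai) _.
  rewrite tailseqD subnKC //; apply: ereal_sup_ubound.
  by exists (shift_seq a (j - i)) => //; exact: incr_seq_shift.
by apply: le_trans (mono a i j ij) _; apply: ereal_sup_ubound; exists a.
Qed.
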